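(* Let $\theta_1,\dots,\theta_{10}$ be real numbers such that $0<\theta_i<\theta_j<\theta_k<180$ for each of the triples $(i,j,k)\in\{(2,4,6),(1,5,9),(1,5,10),(1,5,7),(1,3,7),(1,4,7),(3,5,8),(2,8,9),(6,7,10)\}$, and write $s_{ij}=\sin(\theta_j-\theta_i)$. Suppose $$s_{89}\,s_{1,10}\,s_{24}\,s_{35}\,s_{67}+s_{46}\,s_{19}\,s_{7,10}\,s_{35}\,s_{28}-s_{46}\,s_{38}\,s_{7,10}\,s_{29}\,s_{15}<0 .$$ Then the $9\times 8$ matrix $$S_9=\begin{pmatrix} 0&-s_{58}&0&s_{38}&0&-s_{35}&0&0\\ -s_{89}&0&0&0&0&s_{29}&-s_{28}&0\\ s_{46}&0&-s_{26}&0&s_{24}&0&0&0\\ 0&0&0&0&-s_{7,10}&0&0&-s_{67}\\ 0&s_{17}&0&0&0&0&0&0\\ 0&0&s_{17}&0&0&0&0&0\\ 0&0&0&-s_{19}&0&0&s_{15}&0\\ 0&0&0&-s_{1,10}&0&0&0&s_{15}\\ 0&0&0&-s_{17}&0&0&0&0 \end{pmatrix}$$ is a simplex.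
   Context: Angles are in degrees. A real matrix with $r+1$ rows and $r$ columns is called a simplex if, up to multiplication by a constant, there is precisely one positive linear dependency between its rows, i.e. there is a linear dependency among the rows with all coefficients strictly positive, and every linear dependency among the rows is a scalar multiple of it. (The columns of $S_9$ correspond to the unknowns $r_2,r_3,r_4,r_5,r_6,r_8,r_9,r_{10}$ in the triangle inequalities of a ten-line arrangement.) *)

From Stdlib Require Import Reals.
From mathcomp Require Import all_boot all_order all_algebra.
From mathcomp Require Import Rstruct.
Set Implicit Arguments. Unset Strict Implicit. Unset Printing Implicit Defensive.
Import GRing.Theory Num.Theory.

(* Angles in degrees: we use Stdlib's Rtrigo_calc.sind x = sin (x * PI / 180). *)

Local Open Scope ring_scope.

Definition simplex (r : nat) (S : 'M[R]_(r.+1, r)) : Prop :=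
  exists l : 'rV[R]_(r.+1),
    (forall i, 0 < l 0 i) /\ l *m S = 0 /\
    (forall m : 'rV[R]_(r.+1), m *m S = 0 -> exists c : R, m = c *: l).

Definition mx_of_rows (rows : seq (seq R)) : 'M[R]_(9, 8) :=
  \matrix_(i < 9, j < 8) nth 0 (nth [::] rows i) j.

From Stdlib Require Import Reals Lra.
From mathcomp Require Import all_boot all_order all_algebra.
From mathcomp Require Import Rstruct.
Import Order.TTheory GRing.Theory Num.Theory.
Local Open Scope ring_scope.

(* The sines in S_9 are sines of differences of angles in (0, 180), hence
   positive.  Read as equations on a row dependency x, the columns of S_9
   determine x_1, ..., x_8 successively from x_0, so the dependencies form a
   line.  Solving from x_0 = 1, the coordinates x_1, ..., x_7 are positive
   quotients of sines, and x_8 is a positive multiple of minus the given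
   combination of sines, hence positive as well. *)

Section Degrees.
Local Open Scope R_scope.

Lemma sind_gt_0 (x : R) : 0 < x -> x < 180 -> 0 < Rtrigo_calc.sind x.
Proof.
move=> x_gt0 x_lt180; have PI_gt0 := PI_RGT_0.
rewrite /Rtrigo_calc.sind /Rtrigo_calc.toRad /Rtrigo_calc.plat.
apply: sin_gt_0; first by apply: Rmult_lt_0_compat; [apply: Rmult_lt_0_compat|]; lra.
replace (x * PI * / 180) with ((x / 180) * PI) by (field; lra).
have : x / 180 < 1 by apply: (Rmult_lt_reg_r 180); [lra | field_simplify; lra].
nra.
Qed.

End Degrees.

(* Imported only here: these tactics shadow Stdlib's [lra] and [field] used above. *)
From mathcomp Require Import ring lra.

Lemma sind_triple_gt0 {a b c : R} : (0 < a < b) && (b < c < 180) ->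
  [/\ 0 < Rtrigo_calc.sind (b - a), 0 < Rtrigo_calc.sind (c - a)
    & 0 < Rtrigo_calc.sind (c - b)].
Proof.
have sind_gt0 x : 0 < x < 180 -> 0 < Rtrigo_calc.sind x.
  case/andP=> /RltP x_gt0; rewrite -INRE INR_IZR_INZ => /RltP x_lt180.
  exact/RltP/sind_gt_0.
case/andP=> /andP[a_gt0 ab] /andP[bc c_lt180].
by split; apply: sind_gt0; rewrite RminusE; apply/andP; split; lra.
Qed.

Lemma simplex_of_first_coord (r : nat) (S : 'M[R]_(r.+1, r)) (l : 'rV_r.+1) :
  (forall i, 0 < l 0 i) -> l *m S = 0 ->
  (forall m : 'rV_r.+1, m *m S = 0 -> m 0 ord0 = 0 -> m = 0) -> simplex S.
Proof.
move=> l_gt0 lS0 ker_first; exists l; split=> //; split=> // m mS0.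
have l0_neq0 : l 0 ord0 != 0 by rewrite lt0r_neq0.
exists (m 0 ord0 / l 0 ord0); apply/eqP; rewrite -subr_eq0; apply/eqP.
apply: ker_first; first by rewrite mulmxBl -scalemxAl mS0 lS0 scaler0 subr0.
by rewrite !mxE mulfVK // subrr.
Qed.

Lemma sum_ord9 (F : 'I_9 -> R) : \sum_(k < 9) F k =
  F (inord 0) + F (inord 1) + F (inord 2) + F (inord 3) + F (inord 4) +
  F (inord 5) + F (inord 6) + F (inord 7) + F (inord 8).
Proof.
rewrite (eq_bigr (fun k : 'I_9 => F (inord k))) => [|i _]; last by rewrite inord_val.
by rewrite -(big_mkord xpredT (fun k => F (inord k))) unlock /= addr0 !addrA.
Qed.

Section SimplexS9.

Variables s15 s17 s19 s110 s24 s26 s28 s29 s35 s38 s46 s58 s67 s710 s89 : R.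

Definition S9 : 'M[R]_(9, 8) := mx_of_rows
  [:: [:: 0; - s58; 0; s38; 0; - s35; 0; 0];
      [:: - s89; 0; 0; 0; 0; s29; - s28; 0];
      [:: s46; 0; - s26; 0; s24; 0; 0; 0];
      [:: 0; 0; 0; 0; - s710; 0; 0; - s67];
      [:: 0; s17; 0; 0; 0; 0; 0; 0];
      [:: 0; 0; s17; 0; 0; 0; 0; 0];
      [:: 0; 0; 0; - s19; 0; 0; s15; 0];
      [:: 0; 0; 0; - s110; 0; 0; 0; s15];
      [:: 0; 0; 0; - s17; 0; 0; 0; 0] ].

Lemma mulmx_S9 (x : 'rV[R]_9) : x *m S9 = \row_(j < 8) nth 0
  [:: s46 * x 0 (inord 2) - s89 * x 0 (inord 1);
      s17 * x 0 (inord 4) - s58 * x 0 (inord 0);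
      s17 * x 0 (inord 5) - s26 * x 0 (inord 2);
      s38 * x 0 (inord 0) - s19 * x 0 (inord 6) - s110 * x 0 (inord 7)
        - s17 * x 0 (inord 8);
      s24 * x 0 (inord 2) - s710 * x 0 (inord 3);
      s29 * x 0 (inord 1) - s35 * x 0 (inord 0);
      s15 * x 0 (inord 6) - s28 * x 0 (inord 1);
      s15 * x 0 (inord 7) - s67 * x 0 (inord 3)] j.
Proof.
apply/rowP=> j; rewrite !mxE sum_ord9 /S9 /mx_of_rows !mxE !inordK //.
by case: j => [[|[|[|[|[|[|[|[|//]]]]]]]] _] /=; ring.
Qed.

Hypotheses (p15 : 0 < s15) (p17 : 0 < s17) (p24 : 0 < s24) (p26 : 0 < s26)
  (p28 : 0 < s28) (p29 : 0 < s29) (p35 : 0 < s35) (p46 : 0 < s46)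
  (p58 : 0 < s58) (p67 : 0 < s67) (p710 : 0 < s710) (p89 : 0 < s89).

Let eq0_of_col (a b y z : R) : 0 < a -> z = 0 -> a * y - b * z = 0 -> y = 0.
Proof.
by move=> a_gt0 -> /eqP; rewrite mulr0 subr0 mulf_eq0 gt_eqF //= => /eqP.
Qed.

Lemma S9_kernel_first_coord (x : 'rV[R]_9) : x *m S9 = 0 -> x 0 ord0 = 0 -> x = 0.
Proof.
rewrite mulmx_S9 => /rowP xS0 x0.
have y0 : x 0 (inord 0) = 0 by rewrite -x0; congr (x 0 _); exact/val_inj/inordK.
have y1 : x 0 (inord 1) = 0.
  by move: (xS0 (inord 5)); rewrite !mxE inordK //=; apply: eq0_of_col.
have y2 : x 0 (inord 2) = 0.
  by move: (xS0 (inord 0)); rewrite !mxE inordK //=; apply: eq0_of_col.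
have y3 : x 0 (inord 3) = 0.
  move: (xS0 (inord 4)); rewrite !mxE inordK //= => /eqP.
  by rewrite -oppr_eq0 opprB => /eqP; apply: eq0_of_col.
have y4 : x 0 (inord 4) = 0.
  by move: (xS0 (inord 1)); rewrite !mxE inordK //=; apply: eq0_of_col.
have y5 : x 0 (inord 5) = 0.
  by move: (xS0 (inord 2)); rewrite !mxE inordK //=; apply: eq0_of_col.
have y6 : x 0 (inord 6) = 0.
  by move: (xS0 (inord 6)); rewrite !mxE inordK //=; apply: eq0_of_col.
have y7 : x 0 (inord 7) = 0.
  by move: (xS0 (inord 7)); rewrite !mxE inordK //=; apply: eq0_of_col.
have y8 : x 0 (inord 8) = 0.
  move: (xS0 (inord 3)); rewrite !mxE inordK //= y0 y6 y7 !mulr0 !subr0 sub0r.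
  by move/eqP; rewrite oppr_eq0 mulf_eq0 gt_eqF //= => /eqP.
apply/rowP=> i; rewrite mxE -[i]inord_val.
by case: i => [[|[|[|[|[|[|[|[|[|//]]]]]]]]] ?].
Qed.

Hypothesis sign_cond :
  s89 * s110 * s24 * s35 * s67 + s46 * s19 * s710 * s35 * s28
  - s46 * s38 * s710 * s29 * s15 < 0.

Lemma S9_pos_dependency : exists2 l : 'rV[R]_9, forall i, 0 < l 0 i & l *m S9 = 0.
Proof.
pose y1 := s35 / s29; pose y2 := s89 * y1 / s46; pose y3 := s24 * y2 / s710.
pose y4 := s58 / s17; pose y5 := s26 * y2 / s17; pose y6 := s28 * y1 / s15.
pose y7 := s67 * y3 / s15; pose y8 := (s38 - s19 * y6 - s110 * y7) / s17.
have y8E : y8 = - (s89 * s110 * s24 * s35 * s67 + s46 * s19 * s710 * s35 * s28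
    - s46 * s38 * s710 * s29 * s15) / (s15 * s17 * s29 * s46 * s710).
  by rewrite /y8 /y7 /y6 /y3 /y2 /y1; field; rewrite ?lt0r_neq0.
exists (\row_(i < 9) nth 0 [:: 1; y1; y2; y3; y4; y5; y6; y7; y8] i).
- have y1_gt0 : 0 < y1 by rewrite divr_gt0.
  have y2_gt0 : 0 < y2 by rewrite divr_gt0 // mulr_gt0.
  have y3_gt0 : 0 < y3 by rewrite divr_gt0 // mulr_gt0.
  have y4_gt0 : 0 < y4 by rewrite divr_gt0.
  have y5_gt0 : 0 < y5 by rewrite divr_gt0 // mulr_gt0.
  have y6_gt0 : 0 < y6 by rewrite divr_gt0 // mulr_gt0.
  have y7_gt0 : 0 < y7 by rewrite divr_gt0 // mulr_gt0.
  have y8_gt0 : 0 < y8 by rewrite y8E divr_gt0 ?oppr_gt0 // !mulr_gt0.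
  move=> i; rewrite mxE.
  by case: i => [[|[|[|[|[|[|[|[|[|//]]]]]]]]] _] //=; rewrite ltr01.
- rewrite mulmx_S9; apply/rowP=> j; rewrite !mxE !inordK //.
  case: j => [[|[|[|[|[|[|[|[|//]]]]]]]] _] /=.
  all: by rewrite /y8 /y7 /y6 /y5 /y4 /y3 /y2 /y1; field; rewrite ?lt0r_neq0.
Qed.

Lemma S9_simplex : simplex S9.
Proof.
have [l l_gt0 lS0] := S9_pos_dependency.
exact: simplex_of_first_coord l_gt0 lS0 S9_kernel_first_coord.
Qed.

End SimplexS9.

Theorem mainTheorem4 (t1 t2 t3 t4 t5 t6 t7 t8 t9 t10 : R) :
  (0 < t2 < t4) && (t4 < t6 < 180) ->
  (0 < t1 < t5) && (t5 < t9 < 180) ->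
  (0 < t1 < t5) && (t5 < t10 < 180) ->
  (0 < t1 < t5) && (t5 < t7 < 180) ->
  (0 < t1 < t3) && (t3 < t7 < 180) ->
  (0 < t1 < t4) && (t4 < t7 < 180) ->
  (0 < t3 < t5) && (t5 < t8 < 180) ->
  (0 < t2 < t8) && (t8 < t9 < 180) ->
  (0 < t6 < t7) && (t7 < t10 < 180) ->
  let s := fun a b : R => Rtrigo_calc.sind (b - a) in
  s t8 t9 * s t1 t10 * s t2 t4 * s t3 t5 * s t6 t7
  + s t4 t6 * s t1 t9 * s t7 t10 * s t3 t5 * s t2 t8
  - s t4 t6 * s t3 t8 * s t7 t10 * s t2 t9 * s t1 t5 < 0 ->
  simplex (mx_of_rows
    [:: [:: 0; - s t5 t8; 0; s t3 t8; 0; - s t3 t5; 0; 0];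
        [:: - s t8 t9; 0; 0; 0; 0; s t2 t9; - s t2 t8; 0];
        [:: s t4 t6; 0; - s t2 t6; 0; s t2 t4; 0; 0; 0];
        [:: 0; 0; 0; 0; - s t7 t10; 0; 0; - s t6 t7];
        [:: 0; s t1 t7; 0; 0; 0; 0; 0; 0];
        [:: 0; 0; s t1 t7; 0; 0; 0; 0; 0];
        [:: 0; 0; 0; - s t1 t9; 0; 0; s t1 t5; 0];
        [:: 0; 0; 0; - s t1 t10; 0; 0; 0; s t1 t5];
        [:: 0; 0; 0; - s t1 t7; 0; 0; 0; 0] ]).
Proof.
move=> t246 t159 _ t157 _ _ t358 t289 t6710 s sign_cond.
have [p24 p26 p46] := sind_triple_gt0 t246.
have [p15 _ _] := sind_triple_gt0 t159.
have [_ p17 _] := sind_triple_gt0 t157.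
have [p35 _ p58] := sind_triple_gt0 t358.
have [p28 p29 p89] := sind_triple_gt0 t289.
have [p67 _ p710] := sind_triple_gt0 t6710.
exact: (S9_simplex (s t1 t5) (s t1 t7) (s t1 t9) (s t1 t10) (s t2 t4) (s t2 t6)
  (s t2 t8) (s t2 t9) (s t3 t5) (s t3 t8) (s t4 t6) (s t5 t8) (s t6 t7)
  (s t7 t10) (s t8 t9) p15 p17 p24 p26 p28 p29 p35 p46 p58 p67 p710 p89 sign_cond).
Qed.
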